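(* Let $D=(V,A)$ be a digraph with weight $w\in\{0,1\}^A$ such that $D$ has a dicut and the minimum weight of a dicut is $\tau\ge2$. Let $e\in A$ with $w_e=1$. If there exists $\emptyset\neq U\subsetneq V$ with $\delta^+_D(U)=\{e\}$ and $w(\delta^-_D(U))=0$, then $e$ is not contained in any dicut of weight exactly $\tau$.
   Context: Digraphs are finite and loopless; parallel arcs allowed. $\delta^+_D(U)$ / $\delta^-_D(U)$ denote arcs leaving/entering $U$. A dicut is an arc set of the form $\delta^-_D(W)$ with $\emptyset\neq W\subsetneq V$ and $\delta^+_D(W)=\emptyset$ (equivalently $\delta^+_D(V\setminus W)$ with no arc entering $V\setminus W$). For an arc set $B$, $w(B)=\sum_{e\in B}w_e$. *)

From mathcomp Require Import all_boot.
Set Implicit Arguments. Unset Strict Implicit. Unset Printing Implicit Defensive.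

(* A digraph D = (V, A): finite vertex type V, finite arc type A, each arc
   a has a tail and a head; parallel arcs are allowed (A is an arbitrary
   finType), loops are excluded by the hypothesis [loopless]. *)
Definition loopless (V A : finType) (tail head : A -> V) : Prop :=
  forall a : A, tail a != head a.

Definition dout (V A : finType) (tail head : A -> V) (U : {set V}) : {set A} :=
  [set a | (tail a \in U) && (head a \notin U)].

Definition din (V A : finType) (tail head : A -> V) (U : {set V}) : {set A} :=
  [set a | (tail a \notin U) && (head a \in U)].

Definition is_dicut (V A : finType) (tail head : A -> V) (B : {set A}) : Prop :=
  exists W : {set V}, [/\ W != set0, W != setT,
     dout tail head W = set0 & B = din tail head W].

Definition weight (A : finType) (w : A -> bool) (B : {set A}) : nat :=
  \sum_(e in B) (w e : nat).

From mathcomp Require Import all_boot.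
Set Implicit Arguments. Unset Strict Implicit. Unset Printing Implicit Defensive.

(* Suppose the dicut B = delta^-(W) of weight tau contains e, and let U be as
   in the hypothesis, so tail e lies in U \ W and head e in W \ U.  Uncrossing
   W with U: delta^-(W :&: U) and delta^-(W :|: U) lie in
   delta^-(W) :|: delta^-(U), miss e, and at most e leaves either set.  Hence
   whichever of W :&: U, W :|: U is a nonempty proper set is the shore of a
   dicut of weight at most w(delta^-(W)) - w e + w(delta^-(U)) = tau - 1,
   contradicting minimality.  If neither is, U is the complement of W and
   B = delta^+(U) = {e} has weight 1 < tau. *)

Section Weight.

Variables (A : finType) (w : A -> bool).

Lemma weight_card (B : {set A}) : weight w B = #|B :&: [set a | w a]|.
Proof.
rewrite /weight -sum1_card.
rewrite [RHS](eq_bigl (fun a => (a \in B) && w a)); last by move=> a; rewrite !inE.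
by rewrite big_mkcondr /=; apply: eq_bigr => a _; case: (w a).
Qed.

Lemma weight_subset (B1 B2 : {set A}) :
  B1 \subset B2 -> weight w B1 <= weight w B2.
Proof. by move=> sB; rewrite !weight_card subset_leq_card ?setSI. Qed.

Lemma weight_setU (B1 B2 : {set A}) :
  weight w (B1 :|: B2) <= weight w B1 + weight w B2.
Proof. by rewrite !weight_card setIUl cardsU leq_subr. Qed.

Lemma weight_set1 (a : A) : weight w [set a] = w a.
Proof. by rewrite /weight big_set1. Qed.

Lemma weight_setD1 (B : {set A}) (a : A) :
  a \in B -> weight w B = w a + weight w (B :\ a).
Proof. by move=> aB; rewrite /weight (big_setD1 a aB). Qed.

End Weight.

Section Uncrossing.

Variables (V A : finType) (tail head : A -> V).

Local Notation dout := (dout tail head).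
Local Notation din := (din tail head).

Lemma dout_setC (W : {set V}) : dout (~: W) = din W.
Proof. by apply/setP => a; rewrite !inE negbK. Qed.

Lemma din_setI (W U : {set V}) : din (W :&: U) \subset din W :|: din U.
Proof.
apply/subsetP => a; rewrite !inE negb_and.
by case/andP => /orP [] -> /andP [-> ->]; rewrite ?orbT.
Qed.

Lemma din_setU (W U : {set V}) : din (W :|: U) \subset din W :|: din U.
Proof.
apply/subsetP => a; rewrite !inE negb_or.
by case/andP => /andP [-> ->] /orP [] ->; rewrite ?orbT.
Qed.

Lemma dout_setI (W U : {set V}) : dout (W :&: U) \subset dout W :|: dout U.
Proof. by rewrite -[W]setCK -[U]setCK -setCU !dout_setC din_setU. Qed.

Lemma dout_setU (W U : {set V}) : dout (W :|: U) \subset dout W :|: dout U.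
Proof. by rewrite -[W]setCK -[U]setCK -setCI !dout_setC din_setI. Qed.

Lemma din_eq_dout_compl (W U : {set V}) :
  W :&: U = set0 -> W :|: U = setT -> din W = dout U.
Proof.
move=> WU0 WUT; rewrite -dout_setC; congr dout.
apply/setP => v; move/setP/(_ v): WU0; move/setP/(_ v): WUT.
by rewrite !inE; do 2 case: (_ \in _).
Qed.

Variables (w : A -> bool) (e : A) (W U : {set V}).
Hypotheses (doutW : dout W = set0) (doutU : dout U = [set e])
           (dinU0 : weight w (din U) = 0) (e_dinW : e \in din W) (we : w e).

Let e_ends : [/\ tail e \in U, head e \notin U, tail e \notin W & head e \in W].
Proof.
have : e \in dout U by rewrite doutU set11.
by move: e_dinW; rewrite !inE => /andP [-> ->] /andP [-> ->].
Qed.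

Lemma uncrossed_dicut (X : {set V}) :
  X != set0 -> X != setT ->
  din X \subset din W :|: din U -> dout X \subset dout W :|: dout U ->
  e \notin din X -> e \notin dout X ->
  is_dicut tail head (din X) /\ weight w (din X) < weight w (din W).
Proof.
move=> X0 XT sin sout e_din e_dout; split.
  exists X; split=> //; apply/eqP; rewrite -subset0; apply/subsetP => a aX.
  have := subsetP sout a aX; rewrite doutW doutU set0U inE => /eqP ae.
  by move: e_dout; rewrite -ae aX.
have sinD : din X \subset (din W :\ e) :|: din U.
  apply/subsetP => a aX; have := subsetP sin a aX.
  rewrite !inE; case: eqP aX => [-> | //].
  by rewrite (negbTE e_din).
rewrite (weight_setD1 w e_dinW) we add1n ltnS.
by rewrite -[weight w (din W :\ e)]addn0 -dinU0 (leq_trans (weight_subset w sinD))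
  ?weight_setU.
Qed.

Lemma uncrossed_dicut_setI :
  W :&: U != set0 ->
  is_dicut tail head (din (W :&: U)) /\ weight w (din (W :&: U)) < weight w (din W).
Proof.
have [tailU headU tailW headW] := e_ends.
move=> WU0; apply: uncrossed_dicut => //.
- apply: contraNneq headU => WUT.
  by have := in_setT (head e); rewrite -WUT inE => /andP [].
- exact: din_setI.
- exact: dout_setI.
- by rewrite !inE (negbTE headU) !andbF.
- by rewrite !inE (negbTE tailW).
Qed.

Lemma uncrossed_dicut_setU :
  W :|: U != setT ->
  is_dicut tail head (din (W :|: U)) /\ weight w (din (W :|: U)) < weight w (din W).
Proof.
have [tailU headU tailW headW] := e_ends.
move=> WUT; apply: uncrossed_dicut => //.
- by apply/set0Pn; exists (head e); rewrite inE headW.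
- exact: din_setU.
- exact: dout_setU.
- by rewrite !inE tailU orbT.
- by rewrite !inE headW !andbF.
Qed.

End Uncrossing.

Theorem lemma2 (V A : finType) (tail head : A -> V) (w : A -> bool)
  (tau : nat) (e : A) :
  loopless tail head ->
  (* D has a dicut, and tau is the minimum weight of a dicut *)
  (exists B : {set A}, is_dicut tail head B /\ weight w B = tau) ->
  (forall B : {set A}, is_dicut tail head B -> tau <= weight w B) ->
  2 <= tau ->
  w e = true ->
  (exists U : {set V}, [/\ U != set0, U != setT,
       dout tail head U = [set e] & weight w (din tail head U) = 0]) ->
  forall B : {set A}, is_dicut tail head B -> weight w B = tau -> e \notin B.
Proof.
move=> _ _ tau_min tau_ge2 we [U [_ _ doutU dinU0]] _ [W [_ _ doutW ->]] dinW.
apply/negP => e_dinW.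
have no_lighter_dicut X : ~ (is_dicut tail head (din tail head X) /\
    weight w (din tail head X) < weight w (din tail head W)).
  by case=> /tau_min le_tau lt_W; have := leq_ltn_trans le_tau lt_W; rewrite dinW ltnn.
have [WU0 | WU0] := eqVneq (W :&: U) set0; last first.
  exact: no_lighter_dicut (uncrossed_dicut_setI doutW doutU dinU0 e_dinW we WU0).
have [WUT | WUT] := eqVneq (W :|: U) setT; last first.
  exact: no_lighter_dicut (uncrossed_dicut_setU doutW doutU dinU0 e_dinW we WUT).
by move: tau_ge2; rewrite -dinW (din_eq_dout_compl tail head WU0 WUT) doutU weight_set1 we.
Qed.
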